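(* Let $\mathcal{H}_{A_1},\mathcal{H}_{A_2},\mathcal{H}_{B_1},\mathcal{H}_{B_2}$ be finite-dimensional Hilbert spaces with fixed reference bases of $\mathcal{H}_{A_1}$ and $\mathcal{H}_{A_2}$ (and the product basis on $\mathcal{H}_{A_1}\otimes\mathcal{H}_{A_2}$). For all states $\rho_{A_1B_1}$ on $\mathcal{H}_{A_1}\otimes\mathcal{H}_{B_1}$ and $\rho_{A_2B_2}$ on $\mathcal{H}_{A_2}\otimes\mathcal{H}_{B_2}$, $$C^{A_1A_2|B_1B_2}_{\max}(\rho_{A_1B_1}\otimes\rho_{A_2B_2})=C^{A_1|B_1}_{\max}(\rho_{A_1B_1})+C^{A_2|B_2}_{\max}(\rho_{A_2B_2}).$$
   Context: $D_{\max}(\rho\|\sigma)=\min\{\lambda\ge0:\rho\leq2^\lambda\sigma\}$. For a split $X|Y$ where $X$ has a reference basis, the set $\mathcal{IQ}$ of incoherent-quantum states consists of states $\sum_kp_k\sigma^X_k\otimes\tau^Y_k$ with $\sigma^X_k$ diagonal in the basis of $X$ and $\tau^Y_k$ arbitrary states; $C^{X|Y}_{\max}(\rho_{XY})=\min_{\sigma\in\mathcal{IQ}}D_{\max}(\rho_{XY}\|\sigma)$. *)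

From HB Require Import structures.
From mathcomp Require Import all_boot all_order all_algebra.
From mathcomp Require Import complex mxtens.
From mathcomp Require Import all_classical all_reals ereal exp.
Set Implicit Arguments. Unset Strict Implicit. Unset Printing Implicit Defensive.
Import Order.TTheory GRing.Theory Num.Theory.
Local Open Scope ring_scope.
Local Open Scope classical_set_scope.
Local Open Scope complex_scope.

Section QDefs.
Variable R : realType.
Local Notation C := (R[i]).

Definition adjmx {m n} (A : 'M[C]_(m, n)) : 'M[C]_(n, m) :=
  (map_mx Num.conj A)^T.

Definition psd {n} (A : 'M[C]_n) : Prop :=
  adjmx A = A /\ forall v : 'rV[C]_n, 0 <= (v *m A *m adjmx v) 0 0.

Definition loewner_le {n} (A B : 'M[C]_n) : Prop := psd (B - A).

Definition is_state {n} (A : 'M[C]_n) : Prop := psd A /\ \tr A = 1.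

(* D_max(rho || sigma) = min { lambda >= 0 : rho <= 2^lambda sigma }
   (rendered as an infimum in the extended reals; +oo if the set is empty) *)
Definition Dmax {n} (rho sigma : 'M[C]_n) : \bar R :=
  ereal_inf [set (l%:E)%E | l in
     [set l : R | 0 <= l /\ loewner_le rho ((powR 2 l)%:C *: sigma)]].

(* incoherent-quantum states on X (dim dX, reference basis = standard basis)
   tensor Y (dim dY): finite convex combinations of sigma_k (x) tau_k with
   sigma_k diagonal states on X and tau_k arbitrary states on Y *)
Definition IQ {dX dY} (s : 'M[C]_(dX * dY)) : Prop :=
  exists (K : nat) (p : 'I_K -> R) (sig : 'I_K -> 'M[C]_dX)
         (tau : 'I_K -> 'M[C]_dY),
    (forall k, 0 <= p k) /\ \sum_(k < K) p k = 1 /\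
    (forall k, is_state (sig k) /\ is_diag_mx (sig k)) /\
    (forall k, is_state (tau k)) /\
    s = \sum_(k < K) (p k)%:C *: (sig k *t tau k).

Definition Cmax {dX dY} (rho : 'M[C]_(dX * dY)) : \bar R :=
  ereal_inf [set Dmax rho s | s in [set s | @IQ dX dY s]].

(* reorder the factors of H_(A1 B1) (x) H_(A2 B2) into H_(A1 A2) (x) H_(B1 B2) *)
Definition reorder_index {a1 b1 a2 b2 : nat}
  (i : 'I_((a1 * a2) * (b1 * b2))) : 'I_((a1 * b1) * (a2 * b2)) :=
  let a := (mxtens_unindex i).1 in
  let b := (mxtens_unindex i).2 in
  mxtens_index (mxtens_index ((mxtens_unindex a).1, (mxtens_unindex b).1),
                mxtens_index ((mxtens_unindex a).2, (mxtens_unindex b).2)).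

Definition reorder {a1 b1 a2 b2 : nat} (M : 'M[C]_((a1 * b1) * (a2 * b2)))
  : 'M[C]_((a1 * a2) * (b1 * b2)) :=
  \matrix_(i, j) M (@reorder_index a1 b1 a2 b2 i) (@reorder_index a1 b1 a2 b2 j).

End QDefs.

From Pilot Require Import Defs.
From HB Require Import structures.
From mathcomp Require Import all_boot all_order all_algebra.
From mathcomp Require Import complex mxtens.
From mathcomp Require Import all_classical all_reals ereal sequences exp.
From mathcomp Require Import ring lra.
Import Order.TTheory GRing.Theory Num.Theory.
Local Open Scope ring_scope.

(* Both inequalities are read off the semidefinite program
   [2 ^ Cmax rho = inf {l | rho <= l s for some s in IQ}].
   Subadditivity: feasible points tensor, because IQ is stable under the
   reordered tensor product.  Superadditivity: by duality
   [2 ^ Cmax rho = sup {tr (rho Y) | Y >= 0, every diagonal block of Y <= 1}],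
   and these dual witnesses tensor as well.  Strong duality is proved by hand:
   if no [l < T] is feasible then, for [t < T], [rho] stays at a positive
   distance from the convex set [{mu s - P | 0 <= mu <= t, s in IQ, P >= 0}],
   and an approximate nearest point [c] of that set yields the witness
   [Y ~ rho - c + s I]. *)

Set Implicit Arguments. Unset Strict Implicit. Unset Printing Implicit Defensive.

Section PositiveSemidefinite.
Variable R : realType.
Local Notation C := (R[i]).

Lemma adjmxK m n (A : 'M[C]_(m, n)) : adjmx (adjmx A) = A.
Proof. by apply/matrixP=> i j; rewrite !mxE conjCK. Qed.

Lemma adjmxM m n p (A : 'M[C]_(m, n)) (B : 'M[C]_(n, p)) :
  adjmx (A *m B) = adjmx B *m adjmx A.
Proof.
apply/matrixP=> i j; rewrite !mxE rmorph_sum; apply: eq_bigr => k _.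
by rewrite !mxE rmorphM mulrC.
Qed.

Lemma adjmxD m n (A B : 'M[C]_(m, n)) : adjmx (A + B) = adjmx A + adjmx B.
Proof. by apply/matrixP=> i j; rewrite !mxE rmorphD. Qed.

Lemma adjmxN m n (A : 'M[C]_(m, n)) : adjmx (- A) = - adjmx A.
Proof. by apply/matrixP=> i j; rewrite !mxE rmorphN. Qed.

Lemma adjmxB m n (A B : 'M[C]_(m, n)) : adjmx (A - B) = adjmx A - adjmx B.
Proof. by rewrite adjmxD adjmxN. Qed.

Lemma adjmxZ m n (c : C) (A : 'M[C]_(m, n)) :
  adjmx (c *: A) = Num.conj c *: adjmx A.
Proof. by apply/matrixP=> i j; rewrite !mxE rmorphM. Qed.

Lemma adjmx1 n : adjmx (1%:M : 'M[C]_n) = 1%:M.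
Proof. by apply/matrixP=> i j; rewrite !mxE eq_sym rmorph_nat. Qed.

Lemma adjmx_tens m n p q (A : 'M[C]_(m, n)) (B : 'M[C]_(p, q)) :
  adjmx (A *t B) = adjmx A *t adjmx B.
Proof. by apply/matrixP=> i j; rewrite !mxE rmorphM. Qed.

Definition qform n (v : 'rV[C]_n) (A : 'M[C]_n) : C := (v *m A *m adjmx v) 0 0.

Lemma qformE n (v : 'rV[C]_n) (A : 'M[C]_n) :
  qform v A = \sum_i \sum_j v 0 i * A i j * Num.conj (v 0 j).
Proof.
rewrite /qform mxE exchange_big /=; apply: eq_bigr => j _.
by rewrite !mxE big_distrl.
Qed.

Lemma qformD n (v : 'rV[C]_n) (A B : 'M[C]_n) :
  qform v (A + B) = qform v A + qform v B.
Proof. by rewrite /qform mulmxDr mulmxDl mxE. Qed.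

Lemma qformN n (v : 'rV[C]_n) (A : 'M[C]_n) : qform v (- A) = - qform v A.
Proof. by rewrite /qform mulmxN mulNmx mxE. Qed.

Lemma qformB n (v : 'rV[C]_n) (A B : 'M[C]_n) :
  qform v (A - B) = qform v A - qform v B.
Proof. by rewrite qformD qformN. Qed.

Lemma qformZ n (v : 'rV[C]_n) (c : C) (A : 'M[C]_n) :
  qform v (c *: A) = c * qform v A.
Proof. by rewrite /qform -scalemxAr -scalemxAl mxE. Qed.

Lemma qform_adjmx n (v : 'rV[C]_n) (A : 'M[C]_n) :
  Num.conj (qform v A) = qform v (adjmx A).
Proof.
rewrite /qform; set M := v *m A *m adjmx v.
have -> : Num.conj (M 0 0) = adjmx M 0 0 by rewrite !mxE.
by rewrite /M !adjmxM adjmxK mulmxA.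
Qed.

Lemma mulmx_adjmx_ge0 n (w : 'rV[C]_n) : 0 <= (w *m adjmx w) 0 0.
Proof. by rewrite mxE; apply: sumr_ge0 => k _; rewrite !mxE mul_conjC_ge0. Qed.

Lemma psd_herm n (A : 'M[C]_n) : psd A -> adjmx A = A.
Proof. by case. Qed.

Lemma psd_gram m n (X : 'M[C]_(m, n)) : psd (adjmx X *m X).
Proof.
split=> [|v]; first by rewrite adjmxM adjmxK.
suff -> : v *m (adjmx X *m X) *m adjmx v = (v *m adjmx X) *m adjmx (v *m adjmx X).
  exact: mulmx_adjmx_ge0.
by rewrite adjmxM adjmxK !mulmxA.
Qed.

Lemma psdD n (A B : 'M[C]_n) : psd A -> psd B -> psd (A + B).
Proof.
move=> [hA pA] [hB pB]; split=> [|v]; first by rewrite adjmxD hA hB.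
change (0 <= qform v (A + B)); rewrite qformD; exact: addr_ge0 (pA v) (pB v).
Qed.

Lemma psdZ n (c : C) (A : 'M[C]_n) : 0 <= c -> psd A -> psd (c *: A).
Proof.
move=> c0 [hA pA]; split=> [|v]; first by rewrite adjmxZ hA geC0_conj.
change (0 <= qform v (c *: A)); rewrite qformZ; exact: mulr_ge0 c0 (pA v).
Qed.

Lemma psd1 n : psd (1%:M : 'M[C]_n).
Proof. by have := psd_gram (1%:M : 'M[C]_n); rewrite adjmx1 mulmx1. Qed.

Lemma psd0 n : psd (0 : 'M[C]_n).
Proof. by rewrite -(scale0r (1%:M : 'M[C]_n)); apply: psdZ => //; exact: psd1. Qed.

Lemma psd_sum n (I : finType) (F : I -> 'M[C]_n) :
  (forall i, psd (F i)) -> psd (\sum_i F i).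
Proof. by move=> PF; elim/big_rec: _ => [|i A _]; [apply: psd0 | apply: psdD]. Qed.

Lemma psd_gramP n (A : 'M[C]_n) : psd A -> exists X : 'M[C]_n, A = adjmx X *m X.
Proof.
move=> [hA pA].
have hermA : A \is hermsymmx by apply/eqP; rewrite expr0 scale1r -{1}hA /adjmx map_trmx.
have /orthomx_spectralP Aeq := hermitian_normalmx hermA.
set P := spectralmx A in Aeq; set d := spectral_diag A in Aeq.
have PP : P *m adjmx P = 1%:M.
  by move/unitarymxP: (spectral_unitarymx A); rewrite /adjmx map_trmx.
have iP : invmx P = adjmx P.
  by rewrite invmx_unitary ?spectral_unitarymx // /adjmx map_trmx.
rewrite iP in Aeq.
have d_ge0 k : 0 <= d 0 k.
  have := pA (row k P).
  have -> : (row k P *m A *m adjmx (row k P)) 0 0 = (P *m A *m adjmx P) k k.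
    rewrite !mxE; apply: eq_bigr => l _; rewrite !mxE; congr (_ * _).
    by apply: eq_bigr => l' _; rewrite !mxE.
  by rewrite Aeq !mulmxA PP mul1mx -mulmxA PP mulmx1 !mxE eqxx mulr1n.
pose D : 'M[C]_n := diag_mx (\row_k sqrtC (d 0 k)).
have dD : diag_mx d = adjmx D *m D.
  apply/matrixP=> i j; rewrite mul_mx_diag !mxE.
  case: (eqVneq i j) => [->|ij]; last by rewrite !mulr0n rmorph0 mul0r.
  by rewrite !mulr1n geC0_conj ?sqrtC_ge0 // -expr2 sqrtCK.
exists (D *m P); rewrite Aeq dD adjmxM [in LHS]mulmxA [in RHS]mulmxA.
reflexivity.
Qed.

Lemma adjmx_delta m n (i : 'I_m) (j : 'I_n) :
  adjmx (delta_mx i j : 'M[C]_(m, n)) = delta_mx j i.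
Proof. by apply/matrixP=> k l; rewrite !mxE rmorph_nat andbC. Qed.

Lemma psd_diag_ge0 n (A : 'M[C]_n) i : psd A -> 0 <= A i i.
Proof.
move=> [_ pA]; have := pA (delta_mx 0 i).
by rewrite adjmx_delta -rowE -colE !mxE.
Qed.

Lemma mxtrace_psd_mul n (A B : 'M[C]_n) : psd A -> psd B -> 0 <= \tr (A *m B).
Proof.
move=> /psd_gramP[X ->] [_ pB].
rewrite -mulmxA mxtrace_mulC /mxtrace; apply: sumr_ge0 => k _.
suff -> : (X *m B *m adjmx X) k k = qform (row k X) B by apply: pB.
by rewrite /qform -!row_mul !mxE; apply: eq_bigr => l _; rewrite !mxE.
Qed.

Lemma mxtrace_psd_ge0 n (A : 'M[C]_n) : psd A -> 0 <= \tr A.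
Proof. by move=> pA; rewrite -[A]mulmx1; apply: mxtrace_psd_mul pA (psd1 _). Qed.

End PositiveSemidefinite.

Section KroneckerAlgebra.
Variable K : comPzRingType.

Lemma big_mxtens_index (V : nmodType) m n (F : 'I_(m * n) -> V) :
  \sum_(x < m * n) F x = \sum_(i < m) \sum_(j < n) F (mxtens_index (i, j)).
Proof.
rewrite pair_big /= (reindex (fun p : 'I_m * 'I_n => mxtens_index p)) //=.
  by apply: eq_bigr => -[i j] _.
by exists (@mxtens_unindex m n) => x _; rewrite (mxtens_indexK, mxtens_unindexK).
Qed.

Lemma mxtens_index_eq m n (i i' : 'I_m) (j j' : 'I_n) :
  (mxtens_index (i, j) == mxtens_index (i', j')) = (i == i') && (j == j').
Proof.
apply/eqP/andP => [/(congr1 (@mxtens_unindex m n))|[/eqP-> /eqP->] //].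
by rewrite !mxtens_indexK => -[-> ->].
Qed.

Lemma tensmxBl m n p q (A1 A2 : 'M[K]_(m, n)) (B : 'M[K]_(p, q)) :
  (A1 - A2) *t B = A1 *t B - A2 *t B.
Proof. by apply/matrixP=> i j; rewrite !mxE mulrBl. Qed.

Lemma tensmxBr m n p q (A : 'M[K]_(m, n)) (B1 B2 : 'M[K]_(p, q)) :
  A *t (B1 - B2) = A *t B1 - A *t B2.
Proof. by apply/matrixP=> i j; rewrite !mxE mulrBr. Qed.

Lemma tensmxZl m n p q (c : K) (A : 'M[K]_(m, n)) (B : 'M[K]_(p, q)) :
  (c *: A) *t B = c *: (A *t B).
Proof. by apply/matrixP=> i j; rewrite !mxE mulrA. Qed.

Lemma tensmxZr m n p q (c : K) (A : 'M[K]_(m, n)) (B : 'M[K]_(p, q)) :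
  A *t (c *: B) = c *: (A *t B).
Proof. by apply/matrixP=> i j; rewrite !mxE mulrCA. Qed.

Lemma tensmx_suml m n p q (I : finType) (F : I -> 'M[K]_(m, n)) (B : 'M[K]_(p, q)) :
  (\sum_k F k) *t B = \sum_k F k *t B.
Proof.
apply/matrixP=> i j; rewrite !mxE !summxE big_distrl /=.
by apply: eq_bigr => k _; rewrite !mxE.
Qed.

Lemma tensmx_sumr m n p q (I : finType) (A : 'M[K]_(m, n)) (F : I -> 'M[K]_(p, q)) :
  A *t (\sum_k F k) = \sum_k A *t F k.
Proof.
apply/matrixP=> i j; rewrite !mxE !summxE big_distrr /=.
by apply: eq_bigr => k _; rewrite !mxE.
Qed.

Lemma tensmx11 m n : (1%:M : 'M[K]_m) *t (1%:M : 'M[K]_n) = 1%:M.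
Proof.
apply/matrixP=> i j; case: (mxtens_indexP i) => i1 i2; case: (mxtens_indexP j) => j1 j2.
rewrite tensmxE !mxE mxtens_index_eq.
by case: (i1 == j1); case: (i2 == j2); rewrite ?mulr1 ?mulr0.
Qed.

Lemma mxtrace_tens m n (A : 'M[K]_m) (B : 'M[K]_n) : \tr (A *t B) = \tr A * \tr B.
Proof. by rewrite /mxtrace mulr_sum; apply: eq_bigr => k _; rewrite !mxE. Qed.

Lemma diag_tens m n (A : 'M[K]_m) (B : 'M[K]_n) :
  is_diag_mx A -> is_diag_mx B -> is_diag_mx (A *t B).
Proof.
move=> /is_diag_mxP dA /is_diag_mxP dB; apply/is_diag_mxP => i j.
case: (mxtens_indexP i) => i1 i2; case: (mxtens_indexP j) => j1 j2.
rewrite tensmxE val_eqE mxtens_index_eq negb_and => /orP[/dA -> | /dB ->].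
  by rewrite mul0r.
by rewrite mulr0.
Qed.

End KroneckerAlgebra.

Section KroneckerPositive.
Variable R : realType.
Local Notation C := (R[i]).

Lemma psd_tens m n (A : 'M[C]_m) (B : 'M[C]_n) : psd A -> psd B -> psd (A *t B).
Proof.
move=> /psd_gramP[X ->] /psd_gramP[Y ->].
by rewrite -tensmx_mul -adjmx_tens; apply: psd_gram.
Qed.

Lemma state_tens m n (A : 'M[C]_m) (B : 'M[C]_n) :
  is_state A -> is_state B -> is_state (A *t B).
Proof.
move=> [pA tA] [pB tB]; split; first exact: psd_tens.
by rewrite mxtrace_tens tA tB mulr1.
Qed.

End KroneckerPositive.

Section Reorder.
Variables (R : realType) (a1 b1 a2 b2 : nat).
Local Notation C := (R[i]).
Local Notation M := 'M[C]_((a1 * b1) * (a2 * b2)).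
Local Notation reorder_index := (@reorder_index a1 b1 a2 b2).

Lemma reorder_indexE (i1 : 'I_a1) (i2 : 'I_a2) (j1 : 'I_b1) (j2 : 'I_b2) :
  reorder_index (mxtens_index (mxtens_index (i1, i2), mxtens_index (j1, j2))) =
  mxtens_index (mxtens_index (i1, j1), mxtens_index (i2, j2)).
Proof. by rewrite /Defs.reorder_index !mxtens_indexK. Qed.

Definition reorder_index_inv (k : 'I_((a1 * b1) * (a2 * b2))) :
    'I_((a1 * a2) * (b1 * b2)) :=
  let x := mxtens_unindex (mxtens_unindex k).1 in
  let y := mxtens_unindex (mxtens_unindex k).2 in
  mxtens_index (mxtens_index (x.1, y.1), mxtens_index (x.2, y.2)).

Lemma reorder_index_bij : bijective reorder_index.
Proof.
exists reorder_index_inv => k;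
  case: (mxtens_indexP k) => x y; case: (mxtens_indexP x) => i1 i2;
  case: (mxtens_indexP y) => j1 j2.
  by rewrite reorder_indexE /reorder_index_inv !mxtens_indexK.
by rewrite /reorder_index_inv !mxtens_indexK reorder_indexE.
Qed.

Lemma big_reorder_index (V : nmodType) (F : 'I_((a1 * b1) * (a2 * b2)) -> V) :
  \sum_k F k = \sum_k F (reorder_index k).
Proof.
have [g gK Kg] := reorder_index_bij.
by rewrite (reindex reorder_index) //; exists g => k _; [apply: gK | apply: Kg].
Qed.

Lemma reorderM (A B : M) : reorder A *m reorder B = reorder (A *m B).
Proof.
apply/matrixP=> i j; rewrite !mxE (big_reorder_index (fun k => A _ k * B k _)).
by apply: eq_bigr => k _; rewrite !mxE.
Qed.

Lemma reorder_adjmx (A : M) : adjmx (reorder A) = reorder (adjmx A).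
Proof. by apply/matrixP=> i j; rewrite !mxE. Qed.

Lemma mxtrace_reorder (A : M) : \tr (reorder A) = \tr A.
Proof.
rewrite /mxtrace (big_reorder_index (fun k => A k k)).
by apply: eq_bigr => k _; rewrite !mxE.
Qed.

Lemma reorderB (A B : M) : reorder (A - B) = reorder A - reorder B.
Proof. by apply/matrixP=> i j; rewrite !mxE. Qed.

Lemma reorderZ (c : C) (A : M) : reorder (c *: A) = c *: reorder A.
Proof. by apply/matrixP=> i j; rewrite !mxE. Qed.

Lemma reorder_sum (I : finType) (F : I -> M) :
  reorder (\sum_k F k) = \sum_k reorder (F k).
Proof.
by apply/matrixP=> i j; rewrite !mxE !summxE; apply: eq_bigr => k _; rewrite !mxE.
Qed.

Lemma psd_reorder (A : M) : psd A -> psd (reorder A).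
Proof. by move=> /psd_gramP[X ->]; rewrite -reorderM -reorder_adjmx; apply: psd_gram. Qed.

Lemma reorder_tens (A : 'M[C]_a1) (B : 'M[C]_b1) (D : 'M[C]_a2) (E : 'M[C]_b2) :
  reorder ((A *t B) *t (D *t E)) = (A *t D) *t (B *t E).
Proof.
apply/matrixP=> i j; case: (mxtens_indexP i) => x y; case: (mxtens_indexP j) => x' y'.
case: (mxtens_indexP x) => i1 i2; case: (mxtens_indexP y) => j1 j2.
case: (mxtens_indexP x') => k1 k2; case: (mxtens_indexP y') => l1 l2.
by rewrite mxE !reorder_indexE !tensmxE; ring.
Qed.

End Reorder.

Section IncoherentQuantum.
Variable R : realType.
Local Notation C := (R[i]).
Local Notation "x %:C" := (real_complex R x) (format "x %:C").

Lemma IQ_state dX dY (s : 'M[C]_(dX * dY)) : IQ s -> is_state s.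
Proof.
move=> [K [p [sig [tau [p0 [p1 [hs [ht ->]]]]]]]]; split.
  apply: psd_sum => k; apply: psdZ; first by rewrite lecR.
  by apply: psd_tens; [case: (hs k) => -[] | case: (ht k)].
rewrite raddf_sum /= -[1]/(1%:C) -p1 raddf_sum; apply: eq_bigr => k _.
rewrite mxtraceZ mxtrace_tens; case: (hs k) => -[_ ->] _; case: (ht k) => _ ->.
by rewrite !mulr1.
Qed.

Lemma IQ_herm dX dY (s : 'M[C]_(dX * dY)) : IQ s -> adjmx s = s.
Proof. by move/IQ_state => [[]]. Qed.

Lemma IQ_product_state dX dY (s : 'M[C]_dX) (t : 'M[C]_dY) :
  is_state s -> is_diag_mx s -> is_state t -> IQ (s *t t).
Proof.
move=> ss ds st; exists 1%N, (fun _ => 1), (fun _ => s), (fun _ => t).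
do 4 (split; first by rewrite ?big_ord1).
by rewrite big_ord1 scale1r.
Qed.

Lemma IQ_reorder_tens a1 b1 a2 b2 (s1 : 'M[C]_(a1 * b1)) (s2 : 'M[C]_(a2 * b2)) :
  IQ s1 -> IQ s2 -> IQ (reorder (s1 *t s2)).
Proof.
move=> [K [p [sig [tau [p0 [p1 [hs [ht ->]]]]]]]].
move=> [L [q [sig' [tau' [q0 [q1 [hs' [ht' ->]]]]]]]].
pose u (x : 'I_(K * L)) := mxtens_unindex x.
exists (K * L)%N, (fun x => p (u x).1 * q (u x).2),
  (fun x => sig (u x).1 *t sig' (u x).2), (fun x => tau (u x).1 *t tau' (u x).2).
split; first by move=> x; apply: mulr_ge0.
split; first by rewrite -mulr_sum p1 q1 mulr1.
split.
  move=> x; case: (hs (u x).1) => e1 d1; case: (hs' (u x).2) => e2 d2.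
  by split; [apply: state_tens | apply: diag_tens].
split; first by move=> x; apply: state_tens.
rewrite tensmx_suml reorder_sum big_mxtens_index; apply: eq_bigr => k _.
rewrite tensmx_sumr reorder_sum; apply: eq_bigr => l _.
rewrite /u mxtens_indexK tensmxZl tensmxZr !reorderZ scalerA.
by rewrite reorder_tens rmorphM mulrC.
Qed.

Lemma IQ_convex dX dY (s1 s2 : 'M[C]_(dX * dY)) (a : R) :
  0 <= a <= 1 -> IQ s1 -> IQ s2 -> IQ (a%:C *: s1 + (1 - a)%:C *: s2).
Proof.
move=> /andP[a0 a1].
move=> [K [p [sig [tau [p0 [p1 [hs [ht ->]]]]]]]].
move=> [L [q [sig' [tau' [q0 [q1 [hs' [ht' ->]]]]]]]].
pose glue T (f : 'I_K -> T) (g : 'I_L -> T) x :=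
  match fintype.split x with inl k => f k | inr l => g l end.
have glue_l T f g (k : 'I_K) : @glue T f g (lshift L k) = f k.
  by rewrite /glue -[lshift L k]/(unsplit (inl k)) unsplitK.
have glue_r T f g (l : 'I_L) : @glue T f g (rshift K l) = g l.
  by rewrite /glue -[rshift K l]/(unsplit (inr l)) unsplitK.
exists (K + L)%N, (glue _ (fun k => a * p k) (fun l => (1 - a) * q l)),
  (glue _ sig sig'), (glue _ tau tau').
split.
  by move=> x; rewrite /glue; case: (fintype.split x) => k; rewrite mulr_ge0 ?subr_ge0.
split.
  rewrite big_split_ord /=.
  under eq_bigr do rewrite glue_l. under [X in _ + X]eq_bigr do rewrite glue_r.
  by rewrite -!mulr_sumr p1 q1 !mulr1 addrC subrK.
split; first by move=> x; rewrite /glue; case: (fintype.split x).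
split; first by move=> x; rewrite /glue; case: (fintype.split x).
rewrite big_split_ord /= !scaler_sumr; congr (_ + _); apply: eq_bigr => k _.
  by rewrite !glue_l rmorphM scalerA.
by rewrite !glue_r rmorphM scalerA.
Qed.

Lemma delta_state n (i : 'I_n) : is_state (delta_mx i i : 'M[C]_n).
Proof.
split; first by rewrite -(mul_delta_mx (0 : 'I_1)) -adjmx_delta; apply: psd_gram.
rewrite /mxtrace (bigD1 i) //= big1 ?addr0; first by rewrite mxE !eqxx.
by move=> j /negPf ji; rewrite mxE ji.
Qed.

Lemma delta_diag n (i : 'I_n) : is_diag_mx (delta_mx i i : 'M[C]_n).
Proof.
apply/is_diag_mxP => x y; rewrite val_eqE mxE.
by case: (eqVneq x i) => [->|] //; rewrite eq_sym => /negPf ->.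
Qed.

Lemma uniform_state n : (0 < n)%N -> is_state (n%:R^-1 *: (1%:M : 'M[C]_n)).
Proof.
move=> n0; split; first by apply: psdZ; [rewrite invr_ge0 ler0n | apply: psd1].
by rewrite mxtraceZ mxtrace1 mulVf // pnatr_eq0 -lt0n.
Qed.

Lemma IQ_uniform dX dY : (0 < dX)%N -> (0 < dY)%N ->
  IQ ((dX * dY)%N%:R^-1 *: (1%:M : 'M[C]_(dX * dY))).
Proof.
move=> x0 y0; rewrite -tensmx11 natrM invfM mulrC -scalerA -tensmxZl -tensmxZr.
apply: IQ_product_state; [exact: uniform_state | | exact: uniform_state].
by rewrite scalemx1 scalar_mx_is_diag.
Qed.

End IncoherentQuantum.

Section Duality.
Variable R : realType.
Local Notation C := (R[i]).
Local Notation "x %:C" := (real_complex R x) (format "x %:C").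

Definition feasible dX dY (rho : 'M[C]_(dX * dY)) (l : R) :=
  exists2 s, IQ s & loewner_le rho (l%:C *: s).

Definition diag_block dX dY (i : 'I_dX) (Y : 'M[C]_(dX * dY)) : 'M[C]_dY :=
  \matrix_(a, b) Y (mxtens_index (i, a)) (mxtens_index (i, b)).

(* The dual of the semidefinite program defining [2 ^ Cmax]. *)
Definition dual_feasible dX dY (Y : 'M[C]_(dX * dY)) :=
  psd Y /\ forall i, loewner_le (diag_block i Y) 1%:M.

Lemma feasible_ge1 dX dY (rho : 'M[C]_(dX * dY)) l :
  is_state rho -> feasible rho l -> 1 <= l.
Proof.
move=> [_ tr1] [s /IQ_state[_ ts] /mxtrace_psd_ge0].
by rewrite linearB /= mxtraceZ ts tr1 mulr1 subr_ge0 -[1]/(1%:C) lecR.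
Qed.

Lemma feasible_reorder_tens a1 b1 a2 b2 (r1 : 'M[C]_(a1 * b1)) (r2 : 'M[C]_(a2 * b2))
    l1 l2 :
  psd r1 -> 0 <= l2 -> feasible r1 l1 -> feasible r2 l2 ->
  feasible (reorder (r1 *t r2)) (l1 * l2).
Proof.
move=> pr1 l20 [s1 iq1 le1] [s2 iq2 le2].
exists (reorder (s1 *t s2)); first exact: IQ_reorder_tens.
have ps2 : psd s2 by have [] := IQ_state iq2.
rewrite /loewner_le -reorderZ -reorderB.
have -> : (l1 * l2)%:C *: (s1 *t s2) - r1 *t r2 =
    (l1%:C *: s1 - r1) *t (l2%:C *: s2) + r1 *t (l2%:C *: s2 - r2).
  by rewrite tensmxBl tensmxBr addrA subrK tensmxZl tensmxZr scalerA rmorphM.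
have pl2 : psd (l2%:C *: s2) by apply: psdZ ps2; rewrite ler0c.
apply/psd_reorder/psdD; apply: psd_tens;
  [exact: le1 | exact: pl2 | exact: pr1 | exact: le2].
Qed.

Definition block_row dX dY (i : 'I_dX) (u : 'rV[C]_dY) : 'rV[C]_(dX * dY) :=
  \row_k (if (mxtens_unindex k).1 == i then u 0 (mxtens_unindex k).2 else 0).

Lemma qform_diag_block dX dY (i : 'I_dX) (u : 'rV[C]_dY) (Y : 'M[C]_(dX * dY)) :
  qform u (diag_block i Y) = qform (block_row i u) Y.
Proof.
rewrite !qformE big_mxtens_index (bigD1 i) //= [X in _ + X]big1 ?addr0; last first.
  move=> a /negPf ai; apply: big1 => b _; apply: big1 => k _.
  by rewrite !mxE mxtens_indexK /= ai !mul0r.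
apply: eq_bigr => b _; rewrite big_mxtens_index (bigD1 i) //= [X in _ + X]big1 ?addr0.
  by apply: eq_bigr => b' _; rewrite !mxE !mxtens_indexK /= !eqxx.
move=> a /negPf ai; apply: big1 => b' _.
by rewrite !mxE !mxtens_indexK /= ai conjC0 mulr0.
Qed.

Lemma diag_block_adjmx dX dY (i : 'I_dX) (Y : 'M[C]_(dX * dY)) :
  adjmx (diag_block i Y) = diag_block i (adjmx Y).
Proof. by apply/matrixP=> a b; rewrite !mxE. Qed.

Lemma diag_blockD dX dY (i : 'I_dX) (A B : 'M[C]_(dX * dY)) :
  diag_block i (A + B) = diag_block i A + diag_block i B.
Proof. by apply/matrixP=> a b; rewrite !mxE. Qed.

Lemma diag_blockZ dX dY (i : 'I_dX) (k : C) (A : 'M[C]_(dX * dY)) :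
  diag_block i (k *: A) = k *: diag_block i A.
Proof. by apply/matrixP=> a b; rewrite !mxE. Qed.

Lemma diag_block1 dX dY (i : 'I_dX) : diag_block i (1%:M : 'M[C]_(dX * dY)) = 1%:M.
Proof. by apply/matrixP=> a b; rewrite !mxE mxtens_index_eq eqxx. Qed.

Lemma psd_diag_block dX dY (i : 'I_dX) (Y : 'M[C]_(dX * dY)) :
  psd Y -> psd (diag_block i Y).
Proof.
move=> [hY pY]; split=> [|u].
  by rewrite diag_block_adjmx hY.
by change (0 <= qform u (diag_block i Y)); rewrite qform_diag_block; apply: pY.
Qed.

Lemma dual_feasible1 dX dY : dual_feasible (1%:M : 'M[C]_(dX * dY)).
Proof.
split=> [|i]; first exact: psd1.
by rewrite /loewner_le diag_block1 subrr; exact: psd0.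
Qed.

Lemma mxtrace_tens_diag dX dY (s : 'M[C]_dX) (t : 'M[C]_dY) (Y : 'M[C]_(dX * dY)) :
  is_diag_mx s -> \tr ((s *t t) *m Y) = \sum_a s a a * \tr (t *m diag_block a Y).
Proof.
move=> /is_diag_mxP ds; rewrite /mxtrace big_mxtens_index; apply: eq_bigr => a _.
rewrite big_distrr /=; apply: eq_bigr => b _.
rewrite !mxE big_mxtens_index (bigD1 a) //= [X in _ + X]big1 ?addr0; last first.
  by move=> a' a'a; apply: big1 => b' _; rewrite tensmxE ds ?mul0r // val_eqE eq_sym.
by rewrite big_distrr /=; apply: eq_bigr => b' _; rewrite tensmxE !mxE mulrA.
Qed.

Lemma dual_feasible_IQ dX dY (Y : 'M[C]_(dX * dY)) s :
  dual_feasible Y -> IQ s -> \tr (s *m Y) <= 1.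
Proof.
move=> [pY pB] [K [p [sig [tau [p0 [p1 [hs [ht ->]]]]]]]].
rewrite mulmx_suml raddf_sum /= -[1]/(1%:C) -p1 raddf_sum; apply: ler_sum => k _.
rewrite -scalemxAl mxtraceZ -[X in _ <= X]mulr1 ler_wpM2l ?lecR //.
have [[ps ts] ds] := hs k; have [pt tt] := ht k.
rewrite mxtrace_tens_diag // -ts [X in _ <= X]/mxtrace; apply: ler_sum => a _.
rewrite -[X in _ <= X]mulr1 ler_wpM2l ?psd_diag_ge0 // -tt.
by have := mxtrace_psd_mul pt (pB a); rewrite mulmxBr mulmx1 linearB subr_ge0.
Qed.

Lemma weak_duality dX dY (Y : 'M[C]_(dX * dY)) rho l :
  dual_feasible Y -> feasible rho l -> 0 <= l -> \tr (rho *m Y) <= l%:C.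
Proof.
move=> Yd [s iqs ple] l0.
have := mxtrace_psd_mul ple (proj1 Yd).
rewrite mulmxBl linearB /= subr_ge0 -scalemxAl mxtraceZ => /le_trans; apply.
by rewrite -[X in _ <= X]mulr1 ler_wpM2l ?ler0c // (dual_feasible_IQ Yd iqs).
Qed.

Lemma diag_block_reorder_tens a1 b1 a2 b2 (Y1 : 'M[C]_(a1 * b1))
    (Y2 : 'M[C]_(a2 * b2)) i1 i2 :
  diag_block (mxtens_index (i1, i2)) (reorder (Y1 *t Y2)) =
  diag_block i1 Y1 *t diag_block i2 Y2.
Proof.
apply/matrixP=> b b'.
case: (mxtens_indexP b) => x1 x2; case: (mxtens_indexP b') => z1 z2.
by rewrite [RHS]tensmxE [LHS]mxE [LHS]mxE !reorder_indexE tensmxE !mxE.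
Qed.

Lemma dual_feasible_reorder_tens a1 b1 a2 b2 (Y1 : 'M[C]_(a1 * b1))
    (Y2 : 'M[C]_(a2 * b2)) :
  dual_feasible Y1 -> dual_feasible Y2 -> dual_feasible (reorder (Y1 *t Y2)).
Proof.
move=> [p1 c1] [p2 c2]; split; first exact/psd_reorder/psd_tens.
move=> i; case: (mxtens_indexP i) => i1 i2; rewrite /loewner_le diag_block_reorder_tens.
have -> : 1%:M - diag_block i1 Y1 *t diag_block i2 Y2 =
    (1%:M - diag_block i1 Y1) *t 1%:M + diag_block i1 Y1 *t (1%:M - diag_block i2 Y2).
  by rewrite tensmxBl tensmxBr tensmx11 addrA subrK.
by apply: psdD; apply: psd_tens;
  [exact: c1 | exact: psd1 | exact: psd_diag_block | exact: c2].
Qed.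

Lemma mxtrace_reorder_tens a1 b1 a2 b2 (r1 Y1 : 'M[C]_(a1 * b1))
    (r2 Y2 : 'M[C]_(a2 * b2)) :
  \tr (reorder (r1 *t r2) *m reorder (Y1 *t Y2)) = \tr (r1 *m Y1) * \tr (r2 *m Y2).
Proof. by rewrite reorderM mxtrace_reorder tensmx_mul mxtrace_tens. Qed.

End Duality.

Section HilbertSchmidt.
Variable R : realType.
Local Notation C := (R[i]).
Local Notation "x %:C" := (real_complex R x) (format "x %:C").
Local Notation Re := (@complex.Re R).

Lemma ReD (x y : C) : Re (x + y) = Re x + Re y.
Proof. exact: raddfD. Qed.

Lemma ReB (x y : C) : Re (x - y) = Re x - Re y.
Proof. exact: raddfB. Qed.

Lemma ReZ (k : R) (x : C) : Re (k%:C * x) = k * Re x.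
Proof. by case: x => a b /=; rewrite mul0r subr0. Qed.

Lemma Re_conj (x : C) : Re (Num.conj x) = Re x.
Proof. by case: x. Qed.

Lemma conj_real_complex (k : R) : Num.conj k%:C = k%:C.
Proof. exact: conjc_real. Qed.

Lemma Re_ge0 (x : C) : 0 <= x -> 0 <= Re x.
Proof. by rewrite lecE => /andP[]. Qed.

Lemma ge0_Re_real (x : C) : 0 <= x -> x = (Re x)%:C.
Proof. by move=> x0; rewrite RRe_real ?ger0_real. Qed.

Lemma psd_Re_qform n (A : 'M[C]_n) :
  adjmx A = A -> (forall v, 0 <= Re (qform v A)) -> psd A.
Proof.
move=> hA H; split=> // v; change (0 <= qform v A).
have /eqP := qform_adjmx v A; rewrite hA -CrealE => /RRe_real <-.
by rewrite lecR; apply: H.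
Qed.

Definition vnorm2 n (v : 'rV[C]_n) : R := Re ((v *m adjmx v) 0 0).

Lemma Re_qform1 n (v : 'rV[C]_n) : Re (qform v 1%:M) = vnorm2 v.
Proof. by rewrite /qform mulmx1. Qed.

Lemma vnorm2_gt0 n (v : 'rV[C]_n) : v != 0 -> 0 < vnorm2 v.
Proof.
move=> v0; have : 0 < dotmx v v by move: (dnorm_gt0 (@dotmx C n) v); rewrite v0.
by rewrite dotmxE /adjmx -map_trmx ltcE => /andP[].
Qed.

Definition hsdot n (A B : 'M[C]_n) : R := Re (\tr (A *m adjmx B)).

Local Notation hsnorm2 A := (hsdot A A).

Lemma mxtrace_adjmx n (A : 'M[C]_n) : \tr (adjmx A) = Num.conj (\tr A).
Proof. by rewrite rmorph_sum; apply: eq_bigr => i _; rewrite !mxE. Qed.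

Lemma hsdotC n (A B : 'M[C]_n) : hsdot A B = hsdot B A.
Proof. by rewrite /hsdot -Re_conj -mxtrace_adjmx adjmxM adjmxK. Qed.

Lemma hsdotDl n (A B D : 'M[C]_n) : hsdot (A + B) D = hsdot A D + hsdot B D.
Proof. by rewrite /hsdot mulmxDl mxtraceD ReD. Qed.

Lemma hsdotBl n (A B D : 'M[C]_n) : hsdot (A - B) D = hsdot A D - hsdot B D.
Proof. by rewrite /hsdot mulmxBl linearB ReB. Qed.

Lemma hsdotZl n (k : R) (A D : 'M[C]_n) : hsdot (k%:C *: A) D = k * hsdot A D.
Proof. by rewrite /hsdot -scalemxAl mxtraceZ ReZ. Qed.

Lemma hsdotDr n (A B D : 'M[C]_n) : hsdot D (A + B) = hsdot D A + hsdot D B.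
Proof. by rewrite hsdotC hsdotDl ![hsdot _ D]hsdotC. Qed.

Lemma hsdotBr n (A B D : 'M[C]_n) : hsdot D (A - B) = hsdot D A - hsdot D B.
Proof. by rewrite hsdotC hsdotBl ![hsdot _ D]hsdotC. Qed.

Lemma hsdotZr n (k : R) (A D : 'M[C]_n) : hsdot D (k%:C *: A) = k * hsdot D A.
Proof. by rewrite hsdotC hsdotZl hsdotC. Qed.

Lemma hsdot_herm n (A B : 'M[C]_n) : adjmx B = B -> hsdot A B = Re (\tr (A *m B)).
Proof. by rewrite /hsdot => ->. Qed.

Lemma hsnorm2_ge0 n (A : 'M[C]_n) : 0 <= hsnorm2 A.
Proof.
by rewrite /hsdot -{1}[A]adjmxK Re_ge0 // mxtrace_psd_ge0 //; apply: psd_gram.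
Qed.

Lemma hsnorm2Z n (k : R) (A : 'M[C]_n) : hsnorm2 (k%:C *: A) = k ^+ 2 * hsnorm2 A.
Proof. by rewrite hsdotZl hsdotZr mulrA expr2. Qed.

Lemma hsnorm2DZ n (A B : 'M[C]_n) (k : R) :
  hsnorm2 (A + k%:C *: B) = hsnorm2 A + 2 * k * hsdot A B + k ^+ 2 * hsnorm2 B.
Proof. by rewrite !hsdotDl !hsdotDr !hsdotZl !hsdotZr [hsdot B A]hsdotC; ring. Qed.

Lemma hsnorm2B_le n (A B : 'M[C]_n) : hsnorm2 (A - B) <= 2 * hsnorm2 A + 2 * hsnorm2 B.
Proof.
have := hsnorm2_ge0 (A + B).
rewrite !hsdotBl !hsdotBr !hsdotDl !hsdotDr [hsdot B A]hsdotC; lra.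
Qed.

Lemma hsdot_gram n (Y : 'M[C]_n) (v : 'rV[C]_n) :
  hsdot Y (adjmx v *m v) = Re (qform v Y).
Proof.
by rewrite hsdot_herm ?(psd_herm (psd_gram v)) // mulmxA mxtrace_mulC mulmxA trace_mx11.
Qed.

Lemma hsnorm2_gram n (v : 'rV[C]_n) : hsnorm2 (adjmx v *m v) = vnorm2 v ^+ 2.
Proof.
rewrite hsdot_gram /qform /vnorm2 !mulmxA -mulmxA.
rewrite [X in X *m _]mx11_scalar mul_scalar_mx mxE -/(vnorm2 v).
by rewrite {1}(ge0_Re_real (mulmx_adjmx_ge0 v)) ReZ expr2.
Qed.

Lemma psd_sub_hsnorm2 n (E : 'M[C]_n) (d : R) :
  adjmx E = E -> 0 < d -> hsnorm2 E <= d ^+ 2 -> psd (d%:C *: 1%:M - E).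
Proof.
move=> hE d0 nE; apply: psd_Re_qform => [|v].
  by rewrite adjmxB adjmxZ adjmx1 hE conj_real_complex.
rewrite qformB qformZ ReB ReZ Re_qform1 subr_ge0.
have [->|v0] := eqVneq v 0; first by rewrite /qform /vnorm2 !mul0mx !mxE mulr0.
rewrite -hsdot_gram.
have N0 := vnorm2_gt0 v0; set N := vnorm2 v.
(* Expand [0 <= |E - (d / N) v^* v|^2] and use [|E|^2 <= d^2]. *)
have := hsnorm2_ge0 (E + (- (d / N))%:C *: (adjmx v *m v)).
rewrite hsnorm2DZ hsnorm2_gram -/N => h.
have e : (- (d / N)) ^+ 2 * N ^+ 2 = d ^+ 2.
  by rewrite sqrrN expr_div_n divfK // expf_neq0 // gt_eqF.
have key : 2 * (d / N) * hsdot E (adjmx v *m v) <= 2 * d ^+ 2 by rewrite e in h; lra.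
have dN0 : 0 < 2 * (d / N) by rewrite mulr_gt0 ?divr_gt0.
rewrite -(ler_pM2l dN0) (_ : 2 * (d / N) * (d * N) = 2 * d ^+ 2) //.
by field; exact: lt0r_neq0.
Qed.

End HilbertSchmidt.

Notation hsnorm2 A := (hsdot A A).

Section StrongDuality.
Variable R : realType.
Local Notation C := (R[i]).
Local Notation "x %:C" := (real_complex R x) (format "x %:C").
Local Notation Re := (@complex.Re R).

Lemma state_dims_gt0 dX dY (rho : 'M[C]_(dX * dY)) :
  is_state rho -> (0 < dX)%N /\ (0 < dY)%N.
Proof.
move=> [_ tr1]; apply/andP; rewrite -muln_gt0 lt0n; apply/eqP => n0.
move: tr1; rewrite /mxtrace big1 => [/esym/eqP|i]; first by rewrite oner_eq0.
by have := leq_trans (ltn_ord i) (eq_leq n0).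
Qed.

Lemma gram_block_row dX dY (i : 'I_dX) (u : 'rV[C]_dY) :
  adjmx (block_row i u) *m block_row i u = delta_mx i i *t (adjmx u *m u).
Proof.
apply/matrixP=> k l; case: (mxtens_indexP k) => a b; case: (mxtens_indexP l) => a' b'.
rewrite tensmxE !mxE !big_ord1 !mxE !mxtens_indexK /=.
by case: eqP => _; case: eqP => _; rewrite /= ?conjC0 ?mulr0 ?mul0r ?mulr1 ?mul1r.
Qed.

Lemma vnorm2_block_row dX dY (i : 'I_dX) (u : 'rV[C]_dY) :
  vnorm2 (block_row i u) = vnorm2 u.
Proof. by rewrite -!Re_qform1 -qform_diag_block diag_block1. Qed.

Lemma mxtrace_gram n (u : 'rV[C]_n) : \tr (adjmx u *m u) = (vnorm2 u)%:C.
Proof. by rewrite mxtrace_mulC trace_mx11 -ge0_Re_real // mulmx_adjmx_ge0. Qed.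

Lemma IQ_gram_block_row dX dY (i : 'I_dX) (u : 'rV[C]_dY) : u != 0 ->
  IQ ((vnorm2 (block_row i u))^-1%:C *: (adjmx (block_row i u) *m block_row i u)).
Proof.
move=> u0; have N0 := vnorm2_gt0 u0.
rewrite gram_block_row vnorm2_block_row -tensmxZr.
apply: IQ_product_state; [exact: delta_state | exact: delta_diag | split].
  by apply: psdZ; [rewrite lecR invr_ge0 ltW | apply: psd_gram].
by rewrite mxtraceZ mxtrace_gram -rmorphM mulVf ?gt_eqF.
Qed.

Definition IQ_lower dX dY (t : R) (c : 'M[C]_(dX * dY)) :=
  exists mu s P, [/\ 0 <= mu <= t, IQ s, psd P & c = mu%:C *: s - P].

Section IQLower.
Variables (dX dY : nat) (t : R).
Local Notation IQ_lower := (@IQ_lower dX dY t).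

Lemma IQ_lower_herm c : IQ_lower c -> adjmx c = c.
Proof.
move=> [mu [s [P [_ iqs pP ->]]]].
by rewrite adjmxB adjmxZ conj_real_complex IQ_herm // psd_herm.
Qed.

Lemma IQ_lower_IQ s : 0 <= t -> IQ s -> IQ_lower (t%:C *: s).
Proof.
move=> t0 iqs; exists t, s, 0.
by rewrite lexx t0 subr0; split=> //; apply: psd0.
Qed.

Lemma IQ_lower_subr c P : IQ_lower c -> psd P -> IQ_lower (c - P).
Proof.
move=> [mu [s [P' [mut iqs pP' ->]]]] pP; exists mu, s, (P' + P).
by split; [exact: mut | exact: iqs | exact: psdD | rewrite opprD addrA].
Qed.

Lemma IQ_lower_scale a c : 0 <= a <= 1 -> IQ_lower c -> IQ_lower (a%:C *: c).
Proof.
move=> /andP[a0 a1] [mu [s [P [/andP[mu0 mut] iqs pP ->]]]].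
exists (a * mu), s, (a%:C *: P); split=> [|//||].
- by rewrite mulr_ge0 //= -[t]mul1r ler_pM.
- by apply: psdZ pP; rewrite ler0c.
- by rewrite scalerBr scalerA rmorphM.
Qed.

Lemma IQ_lower_convex a c1 c2 : 0 <= a <= 1 ->
  IQ_lower c1 -> IQ_lower c2 -> IQ_lower (a%:C *: c1 + (1 - a)%:C *: c2).
Proof.
move=> /andP[a0 a1] [mu1 [s1 [P1 [/andP[m10 m1t] iq1 pP1 ->]]]].
move=> [mu2 [s2 [P2 [/andP[m20 m2t] iq2 pP2 ->]]]].
have a'0 : 0 <= 1 - a by rewrite subr_ge0.
set mu := a * mu1 + (1 - a) * mu2.
have mu0 : 0 <= mu by rewrite addr_ge0 ?mulr_ge0.
(* [b] splits [mu] between [s1] and [s2]; it is arbitrary when [mu = 0]. *)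
have [b /andP[b0 b1] eb] : exists2 b, 0 <= b <= 1 & a * mu1 = mu * b.
  have [mu_eq0|mu_gt0] := eqVneq mu 0.
    exists 0; rewrite ?lexx ?ler01 // mulr0.
    by apply/eqP; rewrite eq_le mulr_ge0 // andbT -mu_eq0 /mu lerDl mulr_ge0.
  have mu_gt0' : 0 < mu by rewrite lt_def mu_gt0.
  exists (a * mu1 / mu); last by rewrite mulrCA divff // mulr1.
  by rewrite divr_ge0 ?mulr_ge0 //= ler_pdivrMr // mul1r /mu lerDl mulr_ge0.
have eb' : (1 - a) * mu2 = mu * (1 - b) by rewrite mulrBr mulr1 -eb /mu; ring.
exists mu, (b%:C *: s1 + (1 - b)%:C *: s2), (a%:C *: P1 + (1 - a)%:C *: P2); split.
- rewrite mu0 /= /mu; have := ler_wpM2l a0 m1t; have := ler_wpM2l a'0 m2t; lra.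
- by apply: IQ_convex; rewrite ?b0.
- by apply: psdD; apply: psdZ; rewrite ?lecR.
rewrite !scalerBr scalerDr !scalerA -!rmorphM -eb -eb'.
by rewrite opprD addrACA.
Qed.

End IQLower.

Lemma feasible_near_IQ_lower dX dY (rho c : 'M[C]_(dX * dY)) (t d : R) :
  (0 < dX)%N -> (0 < dY)%N -> adjmx rho = rho -> 0 < d ->
  IQ_lower t c -> hsnorm2 (rho - c) <= d ^+ 2 ->
  exists2 l, l <= t + (dX * dY)%N%:R * d & feasible rho l.
Proof.
move=> x0 y0 hr d0 Kc; have rho_c_herm : adjmx (rho - c) = rho - c.
  by rewrite adjmxB hr (IQ_lower_herm Kc).
move: Kc rho_c_herm => [mu [s [P [/andP[mu0 mut] iqs pP ->]]]] rho_c_herm nE.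
set n := (dX * dY)%N.
have n0 : 0 < n%:R :> R by rewrite ltr0n muln_gt0 x0.
set l := mu + n%:R * d.
have l0 : 0 < l by rewrite /l ltr_wpDl // mulr_gt0.
exists l; first by rewrite lerD2r.
set b := mu / l.
have lb : l * b = mu by rewrite /b mulrC divfK // gt_eqF.
have b01 : 0 <= b <= 1.
  rewrite /b divr_ge0 ?(ltW l0) //= ler_pdivrMr // mul1r lerDl.
  by rewrite mulr_ge0 ?ler0n ?(ltW d0).
exists (b%:C *: s + (1 - b)%:C *: (n%:R^-1 *: 1%:M)); first exact/IQ_convex/IQ_uniform.
have pE := psd_sub_hsnorm2 rho_c_herm d0 nE.
set E := rho - (mu%:C *: s - P).
(* [l (b s + (1 - b) I / n) = mu s + d I] *)
have e : (l * (1 - b))%:C * n%:R^-1 = d%:C.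
  rewrite mulrBr mulr1 lb /l addrC addKr rmorphM rmorph_nat mulrAC divff ?mul1r //.
  by rewrite gt_eqF // ltr0n muln_gt0 x0.
rewrite /loewner_le.
have -> : l%:C *: (b%:C *: s + (1 - b)%:C *: (n%:R^-1 *: 1%:M)) - rho =
    (d%:C *: 1%:M - E) + P.
  rewrite scalerDr !scalerA -!rmorphM lb -e /E.
  by apply/matrixP => i j; rewrite !mxE; ring.
exact: psdD.
Qed.

Lemma approx_argmin (T : Type) (P : T -> Prop) (f : T -> R) (e : R) :
  (exists x, P x) -> (forall x, P x -> 0 <= f x) -> 0 < e ->
  exists2 x, P x & forall z, P z -> f x <= f z + e.
Proof.
move=> [x0 Px0] f0 e0.
pose S : set R := fun r => exists2 x, P x & r = f x.
have hS : has_inf S.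
  by split; [exists (f x0), x0 | exists 0 => r [x Px ->]; apply: f0].
have [_ [x Px ->] rlt] := inf_adherent e0 hS.
exists x => // z Pz; apply/ltW/(lt_le_trans rlt).
by rewrite lerD2r; apply: (ge_inf hS.2); exists z.
Qed.

(* First-order condition at an [s^2]-approximate nearest point [c] of [K]. *)
Lemma approx_nearest_hsdot n (K : 'M[C]_n -> Prop) (rho c w : 'M[C]_n) (s : R) :
  0 < s -> (forall z, K z -> hsnorm2 (rho - c) <= hsnorm2 (rho - z) + s ^+ 2) ->
  K (c + s%:C *: w) -> 2 * hsdot (rho - c) w <= s * (hsnorm2 w + 1).
Proof.
move=> s0 cmin /cmin.
have -> : rho - (c + s%:C *: w) = (rho - c) + (- s)%:C *: w.
  by rewrite rmorphN scaleNr opprD addrA.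
rewrite hsnorm2DZ sqrrN => h; rewrite -(ler_pM2l s0); lra.
Qed.

Lemma dual_feasible_shift dX dY (y : 'M[C]_(dX * dY)) (a s : R) :
  0 <= a -> 0 < s -> psd (y + s%:C *: 1%:M) ->
  (forall i, loewner_le (diag_block i y) (a%:C *: 1%:M)) ->
  dual_feasible ((a + s)^-1%:C *: (y + s%:C *: 1%:M)).
Proof.
move=> a0 s0 py hy; have as0 : 0 < a + s by rewrite ltr_wpDl.
split=> [|i]; first by apply: psdZ py; rewrite ler0c invr_ge0 ltW.
rewrite /loewner_le diag_blockZ diag_blockD diag_blockZ diag_block1.
have -> : 1%:M - (a + s)^-1%:C *: (diag_block i y + s%:C *: 1%:M) =
    (a + s)^-1%:C *: (a%:C *: 1%:M - diag_block i y).
  have as0C : a%:C + s%:C != 0 by rewrite -rmorphD fmorph_eq0 lt0r_neq0.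
  by apply/matrixP=> p q; rewrite !mxE fmorphV rmorphD; field.
by apply: psdZ (hy i); rewrite ler0c invr_ge0 ltW.
Qed.

(* Testing the first-order condition at [c] along [- v^* v], [- c] and
   [t pi - c], for pure incoherent states [pi], gives the three estimates
   below; they make [(rho - c + s I) / (a + s)] a dual witness. *)
Section ApproximateProjection.
Variables (dX dY : nat) (rho c : 'M[C]_(dX * dY)) (t s : R).
Hypotheses (rho_state : is_state rho) (t_gt0 : 0 < t) (s_gt0 : 0 < s) (s_le1 : s <= 1).
Hypothesis c_lower : IQ_lower t c.
Hypothesis c_min :
  forall z, IQ_lower t z -> hsnorm2 (rho - c) <= hsnorm2 (rho - z) + s ^+ 2.
Hypothesis far_from_lower : s * (t ^+ 2 + hsnorm2 c + 1 + t) <= hsnorm2 (rho - c).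

Local Notation y := (rho - c).
Local Notation b := (t ^+ 2 + hsnorm2 c + 1).

Let y_herm : adjmx y = y.
Proof. by rewrite adjmxB (IQ_lower_herm c_lower) psd_herm //; case: rho_state. Qed.

Let psd_shift : psd (y + s%:C *: 1%:M).
Proof.
apply: psd_Re_qform => [|v].
  by rewrite adjmxD adjmxZ y_herm adjmx1 conj_real_complex.
rewrite qformD qformZ ReD ReZ Re_qform1.
have [->|v0] := eqVneq v 0; first by rewrite /qform /vnorm2 !mul0mx !mxE mulr0 addr0.
have N0 := vnorm2_gt0 v0; set N := vnorm2 v; set q := Re (qform v y).
have Kw : IQ_lower t (c + s%:C *: ((- N^-1)%:C *: (adjmx v *m v))).
  rewrite scalerA -rmorphM mulrN rmorphN scaleNr; apply: IQ_lower_subr c_lower _.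
  by apply: psdZ; [rewrite ler0c mulr_ge0 ?invr_ge0 ?ltW | apply: psd_gram].
have := approx_nearest_hsdot s_gt0 c_min Kw.
rewrite hsdotZr hsdot_gram hsnorm2Z hsnorm2_gram sqrrN exprVn.
rewrite mulVf ?expf_neq0 ?gt_eqF // -/q => h.
have -> : q = N * (N^-1 * q) by rewrite mulrA divff ?gt_eqF // mul1r.
rewrite [s * N]mulrC -mulrDr mulr_ge0 ?(ltW N0) //; lra.
Qed.

Let hsdot_lower : 0 <= hsdot y c + s * b.
Proof.
have Kw : IQ_lower t (c + s%:C *: ((-1)%:C *: c)).
  have -> : c + s%:C *: ((-1)%:C *: c) = (1 - s)%:C *: c.
    by rewrite rmorphN1 scaleN1r scalerN rmorphB rmorph1 scalerBl scale1r.
  by apply: IQ_lower_scale c_lower; rewrite subr_ge0 s_le1 lerBlDr lerDl (ltW s_gt0).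
have := approx_nearest_hsdot s_gt0 c_min Kw.
rewrite hsdotZr hsnorm2Z sqrrN expr1n mul1r => h.
have s0 : 0 <= s := ltW s_gt0.
have st := mulr_ge0 s0 (sqr_ge0 t); have sc := mulr_ge0 s0 (hsnorm2_ge0 c).
lra.
Qed.

Let block_bound i u : u != 0 ->
  t * Re (qform u (diag_block i y)) <= (hsdot y c + s * b) * vnorm2 u.
Proof.
move=> u0; have N0 := vnorm2_gt0 u0.
set x := block_row i u; set pi := (vnorm2 x)^-1%:C *: (adjmx x *m x).
have Nx : vnorm2 x = vnorm2 u := vnorm2_block_row i u.
have Kw : IQ_lower t (c + s%:C *: (t%:C *: pi - c)).
  have -> : c + s%:C *: (t%:C *: pi - c) =
      (1 - s)%:C *: c + (1 - (1 - s))%:C *: (t%:C *: pi).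
    by rewrite subKr rmorphB rmorph1 scalerBl scale1r scalerBr addrA addrAC.
  apply: IQ_lower_convex c_lower (IQ_lower_IQ (ltW t_gt0) (IQ_gram_block_row i u0)).
  by rewrite subr_ge0 s_le1 lerBlDr lerDl (ltW s_gt0).
have := approx_nearest_hsdot s_gt0 c_min Kw.
have npi : hsnorm2 pi = 1.
  by rewrite hsnorm2Z hsnorm2_gram exprVn mulVf // expf_neq0 // Nx gt_eqF.
have nw : hsnorm2 (t%:C *: pi - c) <= 2 * t ^+ 2 + 2 * hsnorm2 c.
  by have := hsnorm2B_le (t%:C *: pi) c; rewrite hsnorm2Z npi mulr1.
rewrite hsdotBr hsdotZr hsdotZr hsdot_gram -qform_diag_block Nx => h.
have s0 : 0 <= s := ltW s_gt0; have snw := ler_wpM2l s0 nw.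
have st := mulr_ge0 s0 (sqr_ge0 t); have sc := mulr_ge0 s0 (hsnorm2_ge0 c).
have key : t * ((vnorm2 u)^-1 * Re (qform u (diag_block i y))) <= hsdot y c + s * b.
  by clear Kw npi nw Nx; lra.
have -> : t * Re (qform u (diag_block i y)) =
    t * ((vnorm2 u)^-1 * Re (qform u (diag_block i y))) * vnorm2 u.
  by field; exact: lt0r_neq0.
by apply: ler_wpM2r key; apply: ltW.
Qed.

Lemma approx_projection_dual : exists2 Y, dual_feasible Y & t%:C <= \tr (rho *m Y).
Proof.
have s0 : 0 <= s := ltW s_gt0.
set h := hsdot y c; set a := (h + s * b) / t.
have a0 : 0 <= a by apply: divr_ge0 hsdot_lower (ltW t_gt0).
have ta : t * a = h + s * b by rewrite mulrC (divfK (lt0r_neq0 t_gt0)).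
have hy i : loewner_le (diag_block i y) (a%:C *: 1%:M).
  apply: psd_Re_qform => [|u].
    by rewrite adjmxB adjmxZ adjmx1 conj_real_complex diag_block_adjmx y_herm.
  rewrite qformB qformZ ReB ReZ Re_qform1 subr_ge0.
  have [->|u0] := eqVneq u 0; first by rewrite /qform /vnorm2 !mul0mx !mxE mulr0.
  by rewrite -(ler_pM2l t_gt0) mulrA ta; apply: block_bound.
exists ((a + s)^-1%:C *: (y + s%:C *: 1%:M)); first exact: dual_feasible_shift.
have as0 : 0 < a + s := ltr_wpDl a0 s_gt0.
have tr0 : 0 <= \tr (rho *m ((a + s)^-1%:C *: (y + s%:C *: 1%:M))).
  apply: mxtrace_psd_mul (proj1 rho_state) _.
  by apply: psdZ psd_shift; rewrite ler0c invr_ge0; apply: ltW.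
rewrite (ge0_Re_real tr0) lecR -scalemxAr mxtraceZ ReZ.
rewrite mulmxDr -scalemxAr mulmx1 mxtraceD mxtraceZ ReD ReZ (proj2 rho_state) mulr1.
rewrite -(hsdot_herm _ y_herm) -{1}(subrK c rho) hsdotDl [hsdot c _]hsdotC -/h.
rewrite -(ler_pM2l as0) (mulVKf (lt0r_neq0 as0)) mulrDl [a * t]mulrC ta.
have far : s * (t ^+ 2 + hsnorm2 c + 1 + t) <= hsnorm2 y := far_from_lower.
lra.
Qed.

End ApproximateProjection.

Lemma strong_duality dX dY (rho : 'M[C]_(dX * dY)) (t T : R) :
  is_state rho -> 1 <= t -> t < T -> (forall l, l < T -> ~ feasible rho l) ->
  exists2 Y, dual_feasible Y & t%:C <= \tr (rho *m Y).
Proof.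
move=> st t1 tT nf; have [x0 y0] := state_dims_gt0 st.
have t0 : 0 < t := lt_le_trans ltr01 t1.
have hr : adjmx rho = rho by case: st => -[].
set n : R := (dX * dY)%N%:R.
have n0 : 0 < n by rewrite ltr0n muln_gt0 x0.
set d := Num.min 1 ((T - t) / (2 * n)).
have d0 : 0 < d.
  by rewrite lt_min ltr01 /=; apply: divr_gt0; [rewrite subr_gt0 | apply: mulr_gt0].
have d1 : d <= 1 by rewrite ge_min lexx.
have dT : n * d <= (T - t) / 2.
  have : d <= (T - t) / (2 * n) by rewrite ge_min lexx orbT.
  have two0 : (0 : R) < 2 by rewrite ltr0n.
  rewrite ler_pdivlMr ?(mulr_gt0 two0 n0) // => h.
  by rewrite ler_pdivlMr //; lra.
have far c : IQ_lower t c -> d ^+ 2 <= hsnorm2 (rho - c).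
  move=> Kc; rewrite leNgt; apply/negP => /ltW near.
  have [l lt fl] := feasible_near_IQ_lower x0 y0 hr d0 Kc near.
  by apply: (nf l) fl; lra.
have R0 := hsnorm2_ge0 rho.
set den := t ^+ 2 + 4 * hsnorm2 rho + 3 + t.
have den1 : 1 <= den by have := sqr_ge0 t; rewrite /den; lra.
set s := d ^+ 2 / den.
have s0 : 0 < s by rewrite divr_gt0 ?exprn_gt0 // (lt_le_trans ltr01 den1).
have sden : s * den = d ^+ 2 by rewrite divfK // gt_eqF // (lt_le_trans ltr01 den1).
have s1 : s <= 1.
  rewrite ler_pdivrMr ?(lt_le_trans ltr01 den1) // mul1r (le_trans _ den1) //.
  by rewrite exprn_ile1 // ltW.
have K0 : IQ_lower t (0 : 'M[C]_(dX * dY)).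
  exists 0, ((dX * dY)%N%:R^-1 *: 1%:M), 0.
  by rewrite lexx (ltW t0) scale0r subr0; split=> //; [exact: IQ_uniform | exact: psd0].
have [c Kc cmin] := approx_argmin (ex_intro _ 0 K0)
  (fun z _ => hsnorm2_ge0 (rho - z)) (exprn_gt0 2 s0).
apply: (approx_projection_dual st t0 s0 s1 Kc cmin).
have := cmin 0 K0; rewrite subr0 => ny.
have nc : hsnorm2 c <= 4 * hsnorm2 rho + 2.
  have := hsnorm2B_le rho (rho - c); rewrite opprB addrC subrK.
  have := exprn_ile1 2 (ltW s0) s1; lra.
have le_den : t ^+ 2 + hsnorm2 c + 1 + t <= den by rewrite /den; lra.
have := ler_wpM2l (ltW s0) le_den; rewrite sden => h.
exact: le_trans h (far c Kc).
Qed.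

End StrongDuality.

Section MaxRelativeEntropy.
Variable R : realType.
Local Notation C := (R[i]).
Local Notation "x %:C" := (real_complex R x) (format "x %:C").
Local Open Scope ereal_scope.

Lemma powR2E (x : R) : powR 2 x = expR (x * ln 2).
Proof. by rewrite /powR pnatr_eq0. Qed.

Lemma ln2_gt0 : (0 < ln (2 : R))%R.
Proof. by rewrite ln_gt0 // ltr1n. Qed.

Lemma powR2_lt (x y : R) : (powR 2 x < powR 2 y)%R = (x < y)%R.
Proof. by rewrite !powR2E ltr_expR ltr_pM2r // ln2_gt0. Qed.

Lemma powR2_le (x y : R) : (powR 2 x <= powR 2 y)%R = (x <= y)%R.
Proof. by rewrite !leNgt powR2_lt. Qed.

Lemma powR2D (x y : R) : powR 2 (x + y) = (powR 2 x * powR 2 y)%R.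
Proof. by rewrite !powR2E mulrDl expRD. Qed.

Lemma powR2_log2 (l : R) : (0 < l)%R -> powR 2 (ln l / ln 2) = l.
Proof. by move=> l0; rewrite powR2E divfK ?lnK // gt_eqF // ln2_gt0. Qed.

Lemma Cmax_le dX dY (rho : 'M[C]_(dX * dY)) l :
  (0 <= l)%R -> feasible rho (powR 2 l) -> Cmax rho <= l%:E.
Proof.
move=> l0 [s iqs le]; apply: (@le_trans _ _ (Dmax rho s)).
  by apply: ereal_inf_lbound; exists s.
by apply: ereal_inf_lbound; exists l.
Qed.

Lemma Cmax_lt dX dY (rho : 'M[C]_(dX * dY)) l : Cmax rho < l%:E ->
  exists l', [/\ (0 <= l')%R, (l' < l)%R & feasible rho (powR 2 l')].
Proof.
move=> /ereal_inf_lt[_ [s iqs <-]] /ereal_inf_lt[_ [l' [l'0 le] <-]].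
by rewrite lte_fin => l'l; exists l'; split=> //; exists s.
Qed.

Lemma Cmax_ge dX dY (rho : 'M[C]_(dX * dY)) (x : \bar R) :
  (forall l, (0 <= l)%R -> feasible rho (powR 2 l) -> x <= l%:E) -> x <= Cmax rho.
Proof.
move=> H; apply: le_ereal_inf_tmp => _ [s iqs <-].
by apply: le_ereal_inf_tmp => _ [l [l0 le] <-]; apply: H => //; exists s.
Qed.

Lemma Cmax_ge0 dX dY (rho : 'M[C]_(dX * dY)) : 0 <= Cmax rho.
Proof. by apply: Cmax_ge => l l0 _; rewrite lee_fin. Qed.

Lemma dual_below_Cmax dX dY (rho : 'M[C]_(dX * dY)) (a t : R) :
  is_state rho -> a%:E < Cmax rho -> (t < powR 2 a)%R ->
  exists2 Y, dual_feasible Y & (t%:C <= \tr (rho *m Y))%R.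
Proof.
move=> st aC tT; have [t1|t1] := lerP t 1.
  by exists 1%:M; [exact: dual_feasible1 | rewrite mulmx1 (proj2 st) -[1%R]/(1%:C) lecR].
apply: (strong_duality st (ltW t1) tT) => l lT fl.
have l1 := feasible_ge1 st fl; have l0 : (0 < l)%R := lt_le_trans ltr01 l1.
have x0 : (0 <= ln l / ln 2)%R by apply: divr_ge0; [exact: ln_ge0 | exact/ltW/ln2_gt0].
have fl' : feasible rho (powR 2 (ln l / ln 2)) by rewrite (powR2_log2 l0).
have := lt_le_trans aC (Cmax_le x0 fl').
by rewrite lte_fin -powR2_lt (powR2_log2 l0) => /(lt_trans lT); rewrite ltxx.
Qed.

Lemma lee_add_gt (x y z : \bar R) : 0 <= y -> 0 <= z ->
  (forall r s : R, y < r%:E -> z < s%:E -> x <= (r + s)%:E) -> x <= y + z.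
Proof.
case: y => [y||] //; case: z => [z||] // y0 z0 H; rewrite ?leey //.
apply/lee_addgt0Pr => e e0; rewrite -EFinD.
have e20 : (0 < e / 2)%R by rewrite divr_gt0.
apply: le_trans (H (y + e / 2)%R (z + e / 2)%R _ _) _; rewrite ?lte_fin ?ltrDl //.
by rewrite lee_fin; lra.
Qed.

Lemma lt_add_split (x y : \bar R) (l : R) : 0 <= x -> 0 <= y -> l%:E < x + y ->
  exists a1 a2 : R, [/\ a1%:E < x, a2%:E < y & (l < a1 + a2)%R].
Proof.
case: x => [x||] //; case: y => [y||] // x0 y0.
- rewrite -EFinD lte_fin => h; exists (x - (x + y - l) / 3)%R, (y - (x + y - l) / 3)%R.
  by rewrite !lte_fin; split; lra.
- by move=> _; exists (x - 1)%R, (l - x + 2)%R; rewrite lte_fin ltry; split=> //; lra.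
- by move=> _; exists (l - y + 2)%R, (y - 1)%R; rewrite lte_fin ltry; split=> //; lra.
- by move=> _; exists l, 1%R; rewrite !ltry; split=> //; lra.
Qed.

Section Tensor.
Variables (dA1 dB1 dA2 dB2 : nat) (rho1 : 'M[C]_(dA1 * dB1)) (rho2 : 'M[C]_(dA2 * dB2)).
Hypotheses (st1 : is_state rho1) (st2 : is_state rho2).

Lemma Cmax_reorder_tens_le : Cmax (reorder (rho1 *t rho2)) <= Cmax rho1 + Cmax rho2.
Proof.
apply: lee_add_gt; [exact: Cmax_ge0 | exact: Cmax_ge0 |] => l1 l2.
move=> /Cmax_lt[l1' [l10 l11 f1]] /Cmax_lt[l2' [l20 l22 f2]].
have := feasible_reorder_tens (proj1 st1) (powR_ge0 _ _) f1 f2; rewrite -powR2D => f.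
by apply: le_trans (Cmax_le (addr_ge0 l10 l20) f) _; rewrite lee_fin lerD // ltW.
Qed.

Lemma Cmax_reorder_tens_ge : Cmax rho1 + Cmax rho2 <= Cmax (reorder (rho1 *t rho2)).
Proof.
apply: Cmax_ge => l l0 f12; rewrite leNgt; apply/negP => hlt.
have [a1 [a2 [h1 h2 hl]]] := lt_add_split (Cmax_ge0 _) (Cmax_ge0 _) hlt.
pose e := ((a1 + a2 - l) / 3)%R.
have e1 : (powR 2 (a1 - e) < powR 2 a1)%R by rewrite powR2_lt /e; lra.
have e2 : (powR 2 (a2 - e) < powR 2 a2)%R by rewrite powR2_lt /e; lra.
have [Y1 Y1_dual tr1] := dual_below_Cmax st1 h1 e1.
have [Y2 Y2_dual tr2] := dual_below_Cmax st2 h2 e2.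
have := weak_duality (dual_feasible_reorder_tens Y1_dual Y2_dual) f12 (powR_ge0 _ _).
have p k : (0 <= (powR 2 k)%:C)%R by rewrite ler0c powR_ge0.
rewrite mxtrace_reorder_tens => h; have := le_trans (ler_pM (p _) (p _) tr1 tr2) h.
by rewrite -rmorphM lecR -powR2D powR2_le /e => ?; lra.
Qed.

End Tensor.

End MaxRelativeEntropy.

Unset Implicit Arguments.

Theorem proposition10 (R : realType) (dA1 dA2 dB1 dB2 : nat)
  (rho1 : 'M[R[i]]_(dA1 * dB1)) (rho2 : 'M[R[i]]_(dA2 * dB2)) :
  is_state rho1 -> is_state rho2 ->
  @Cmax R (dA1 * dA2) (dB1 * dB2) (@reorder R dA1 dB1 dA2 dB2 (rho1 *t rho2)) =
  (@Cmax R dA1 dB1 rho1 + @Cmax R dA2 dB2 rho2)%E.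
Proof.
move=> st1 st2; apply/le_anti/andP; split.
  exact: Cmax_reorder_tens_le.
exact: Cmax_reorder_tens_ge.
Qed.
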